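(* Let $p_1,\dots,p_n\in S^1$ and let $a_1,\dots,a_n$ be nonnegative integers with $a_1+\cdots+a_n$ even. Then the ideal $\mathfrak m_{p_1}^{a_1}\mathfrak m_{p_2}^{a_2}\cdots\mathfrak m_{p_n}^{a_n}$ of $C_{an}(S^1;\mathbf{R})$ is principal.
   Context: $S^1$ is identified with $\mathbf{R}/2\pi\mathbf{Z}$. $C_{an}(S^1;\mathbf{R})$ is the ring (under pointwise operations) of real-valued real-analytic functions on $S^1$, i.e. $2\pi$-periodic real-analytic functions $\mathbf{R}\to\mathbf{R}$. For $p\in S^1$, $\mathfrak m_p=\{f\in C_{an}(S^1;\mathbf{R}): f(p)=0\}$. *)

From Stdlib Require Import Reals Lra Lia Arith.
Open Scope R_scope.

Definition real_analytic (f : R -> R) : Prop :=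
  forall x0 : R, exists r : R, 0 < r /\ exists c : nat -> R,
    forall x : R, Rabs (x - x0) < r ->
      infinite_sum (fun k => c k * (x - x0) ^ k) (f x).

Definition periodic2pi (f : R -> R) : Prop :=
  forall x : R, f (x + 2 * PI) = f x.

(* The ring C_an(S^1;R), as a subset of R -> R (pointwise operations). *)
Definition Can (f : R -> R) : Prop := real_analytic f /\ periodic2pi f.

(* Maximal ideal m_p = { f in C_an : f(p) = 0 }, p in R representing p mod 2pi. *)
Definition mideal (p : R) (f : R -> R) : Prop := Can f /\ f p = 0.

Inductive idmul (I J : (R -> R) -> Prop) : (R -> R) -> Prop :=
| idmul_gen : forall g h, I g -> J h -> idmul I J (fun x => g x * h x)
| idmul_add : forall f1 f2, idmul I J f1 -> idmul I J f2 ->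
    idmul I J (fun x => f1 x + f2 x).

Fixpoint idpow (I : (R -> R) -> Prop) (n : nat) : (R -> R) -> Prop :=
  match n with
  | O => Can
  | S m => idmul (idpow I m) I
  end.

Fixpoint prod_mpow (n : nat) (p : nat -> R) (a : nat -> nat) : (R -> R) -> Prop :=
  match n with
  | O => Can
  | S m => idmul (prod_mpow m p a) (idpow (mideal (p m)) (a m))
  end.

Fixpoint nsum (n : nat) (a : nat -> nat) : nat :=
  match n with
  | O => 0%nat
  | S m => (nsum m a + a m)%nat
  end.

Definition principal_ideal (I : (R -> R) -> Prop) : Prop :=
  exists g : R -> R, Can g /\
    forall f : R -> R, I f <-> exists h : R -> R, Can h /\ forall x, f x = g x * h x.

(* The function s_p(x) = sin((x - p)/2) is real-analytic, vanishes to first order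
   exactly on p + 2 pi Z and satisfies s_p(x + 2 pi) = - s_p(x).  Dividing by it shows
   that m_p = s_p . A_1, where A_N denotes the real-analytic h with
   h(x + 2 pi) = (-1)^N h(x).  These modules multiply as A_M A_N = A_(M+N): when M and
   N are both odd, write h = (h c) c + (h s) s with c = cos(x/2), s = sin(x/2) in A_1.
   Hence m_(p_1)^(a_1) ... m_(p_n)^(a_n) = G . A_N with G = prod s_(p_i)^(a_i) and
   N = sum a_i, and for N even A_N = C_an(S^1), so the ideal is generated by G. *)

From Stdlib Require Import Reals Lra Lia ZArith FunctionalExtensionality.
From Coquelicot Require Import Coquelicot.
Open Scope R_scope.

Definition analytic_at (f : R -> R) (x0 : R) : Prop :=
  exists (c : nat -> R) (r : R), 0 < r /\ Rbar_le r (CV_radius c) /\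
    forall x, Rabs (x - x0) < r -> f x = PSeries c (x - x0).

Definition analytic (f : R -> R) : Prop := forall x0, analytic_at f x0.

Lemma Rbar_lt_CV_radius (c : nat -> R) (r y : R) :
  Rbar_le r (CV_radius c) -> Rabs y < r -> Rbar_lt (Rabs y) (CV_radius c).
Proof. intros Hr Hy. exact (Rbar_lt_le_trans (Rabs y) r _ Hy Hr). Qed.

Lemma ex_pseries_bounded_terms (c : nat -> R) (t : R) :
  ex_pseries c t -> exists M, forall n, Rabs (c n * t ^ n) <= M.
Proof.
  intros [l Hl].
  destruct (filterlim_bounded (fun n => c n * t ^ n)) as [M HM].
  { exists 0. apply ex_series_lim_0. exists l.
    apply is_series_ext with (2 := Hl). intros n.
    rewrite pow_n_pow. apply Rmult_comm. }
  exists M. exact HM.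
Qed.

Lemma CV_radius_ge (c : nat -> R) (r : R) :
  (forall t, 0 <= t < r -> ex_pseries c t) -> Rbar_le r (CV_radius c).
Proof.
  intros Hc.
  assert (Hle : forall t, 0 <= t < r -> Rbar_le t (CV_radius c)).
  { intros t Ht. apply (proj1 (CV_radius_bounded c)).
    exact (ex_pseries_bounded_terms c t (Hc t Ht)). }
  destruct (Rle_lt_dec r 0) as [Hr | Hr].
  { apply Rbar_le_trans with 0; [simpl; exact Hr | apply CV_radius_ge_0]. }
  destruct (CV_radius c) as [R0 | |] eqn:ER; simpl; [| exact I |].
  - apply Rnot_lt_le. intros HR.
    assert (H0 : Rbar_le 0 R0) by (rewrite <- ER; apply CV_radius_ge_0).
    simpl in H0. specialize (Hle ((R0 + r) / 2) ltac:(lra)). simpl in Hle. lra.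
  - specialize (Hle 0 ltac:(lra)). exact Hle.
Qed.

Lemma analytic_at_PSeries (c : nat -> R) (r x0 : R) :
  0 < r -> Rbar_le r (CV_radius c) -> analytic_at (fun x => PSeries c (x - x0)) x0.
Proof. intros Hr Hc. exists c, r. repeat split; auto. Qed.

Lemma real_analytic_analytic (f : R -> R) : real_analytic f <-> analytic f.
Proof.
  split.
  - intros Hf x0. destruct (Hf x0) as [r [Hr [c Hc]]].
    assert (Hsum : forall x, Rabs (x - x0) < r -> is_pseries c (x - x0) (f x)).
    { intros x Hx. apply is_pseries_Reals. exact (Hc x Hx). }
    exists c, r. split; [exact Hr |]. split.
    + apply CV_radius_ge. intros t Ht. exists (f (x0 + t)).
      assert (Ht' : Rabs (x0 + t - x0) < r)
        by (replace (x0 + t - x0) with t by ring; rewrite Rabs_pos_eq; lra).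
      pose proof (Hsum _ Ht') as H. replace (x0 + t - x0) with t in H by ring. exact H.
    + intros x Hx. symmetry. apply is_pseries_unique, Hsum, Hx.
  - intros Hf x0. destruct (Hf x0) as [c [r [Hr [Hc Heq]]]].
    exists r. split; [exact Hr |]. exists c. intros x Hx.
    rewrite Heq by exact Hx. apply is_pseries_Reals, PSeries_correct, CV_radius_inside.
    exact (Rbar_lt_CV_radius c r _ Hc Hx).
Qed.

Lemma analytic_at_locally (f g : R -> R) (x0 : R) :
  analytic_at f x0 -> (exists r, 0 < r /\ forall x, Rabs (x - x0) < r -> g x = f x) ->
  analytic_at g x0.
Proof.
  intros [c [r [Hr [Hc Hf]]]] [r' [Hr' Hg]].
  pose proof (Rmin_l r r'); pose proof (Rmin_r r r').
  exists c, (Rmin r r'). split; [apply Rmin_pos; lra |]. split.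
  - apply Rbar_le_trans with r; [simpl; lra | exact Hc].
  - intros x Hx. rewrite Hg by lra. apply Hf; lra.
Qed.

Lemma is_pseries_of_constant (u : nat -> R) (x : R) :
  (forall n, u (S n) = 0) -> is_pseries u x (u 0%nat).
Proof.
  intros Hu. apply is_pseries_Reals. intros eps Heps. exists 0%nat. intros n _.
  replace (sum_f_R0 (fun i => u i * x ^ i) n) with (u 0%nat).
  - unfold Rdist. rewrite Rminus_diag, Rabs_R0. exact Heps.
  - induction n; simpl; [ring | rewrite Hu, <- IHn; ring].
Qed.

Lemma analytic_at_const (k x0 : R) : analytic_at (fun _ => k) x0.
Proof.
  set (c := fun n : nat => match n with O => k | S _ => 0 end).
  assert (Hc : forall y, is_pseries c y k) by (intros y; now apply is_pseries_of_constant).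
  exists c, 1. split; [lra |]. split.
  - apply CV_radius_ge. intros t _. exists k. apply Hc.
  - intros x _. symmetry. apply is_pseries_unique, Hc.
Qed.

Lemma analytic_at_plus (f g : R -> R) (x0 : R) :
  analytic_at f x0 -> analytic_at g x0 -> analytic_at (fun x => f x + g x) x0.
Proof.
  intros [c [r [Hr [Hc Hf]]]] [d [s [Hs [Hd Hg]]]].
  pose proof (Rmin_l r s); pose proof (Rmin_r r s).
  assert (Hcd : forall y, Rabs y < Rmin r s ->
    ex_pseries c y /\ ex_pseries d y).
  { intros y Hy. split; apply CV_radius_inside;
      [apply (Rbar_lt_CV_radius _ r) | apply (Rbar_lt_CV_radius _ s)]; auto; lra. }
  exists (PS_plus c d), (Rmin r s). split; [apply Rmin_pos; lra |]. split.
  - apply CV_radius_ge. intros t Ht.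
    destruct (Hcd t) as [H1 H2]; [rewrite Rabs_pos_eq; lra |].
    exact (ex_pseries_plus c d t H1 H2).
  - intros x Hx. destruct (Hcd (x - x0) Hx) as [H1 H2].
    rewrite PSeries_plus, Hf, Hg by (assumption || lra). reflexivity.
Qed.

Lemma analytic_at_mult (f g : R -> R) (x0 : R) :
  analytic_at f x0 -> analytic_at g x0 -> analytic_at (fun x => f x * g x) x0.
Proof.
  intros [c [r [Hr [Hc Hf]]]] [d [s [Hs [Hd Hg]]]].
  pose proof (Rmin_l r s); pose proof (Rmin_r r s).
  assert (Hcd : forall y, Rabs y < Rmin r s ->
    Rbar_lt (Rabs y) (CV_radius c) /\ Rbar_lt (Rabs y) (CV_radius d)).
  { intros y Hy. split; [apply (Rbar_lt_CV_radius _ r) | apply (Rbar_lt_CV_radius _ s)]; auto; lra. }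
  exists (PS_mult c d), (Rmin r s). split; [apply Rmin_pos; lra |]. split.
  - apply CV_radius_ge. intros t Ht.
    destruct (Hcd t) as [H1 H2]; [rewrite Rabs_pos_eq; lra |].
    exact (ex_pseries_mult c d t H1 H2).
  - intros x Hx. destruct (Hcd (x - x0) Hx) as [H1 H2].
    rewrite PSeries_mult, Hf, Hg by (assumption || lra). reflexivity.
Qed.

Lemma analytic_at_slope (f : R -> R) (x0 : R) : analytic_at f x0 ->
  exists F, analytic_at F x0 /\ is_derive f x0 (F x0) /\
    exists r, 0 < r /\ forall x, Rabs (x - x0) < r -> f x = f x0 + (x - x0) * F x.
Proof.
  intros [c [r [Hr [Hc Hf]]]].
  assert (Hin : forall x, Rabs (x - x0) < r -> Rbar_lt (Rabs (x - x0)) (CV_radius c))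
    by (intros x; apply Rbar_lt_CV_radius, Hc).
  assert (Hx0 : Rabs (x0 - x0) < r) by (rewrite Rminus_diag, Rabs_R0; exact Hr).
  assert (Hfx0 : f x0 = c 0%nat) by (rewrite Hf, Rminus_diag by exact Hx0; apply PSeries_0).
  exists (fun x => PSeries (PS_decr_1 c) (x - x0)). split; [| split].
  - apply analytic_at_PSeries with r; [exact Hr | now rewrite CV_radius_decr_1].
  - rewrite Rminus_diag, PSeries_0.
    apply is_derive_ext_loc with (fun x => PSeries c (x - x0)).
    { exists (mkposreal r Hr). intros y Hy. symmetry. apply Hf, Hy. }
    replace (PS_decr_1 c 0%nat) with (1 * PSeries (PS_derive c) (x0 - x0)).
    + apply (is_derive_comp (PSeries c) (fun x => x - x0)).
      * apply is_derive_PSeries, Hin, Hx0.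
      * auto_derive; [exact I | ring].
    + rewrite Rminus_diag, PSeries_0. unfold PS_derive, PS_decr_1. simpl. ring.
  - exists r. split; [exact Hr |]. intros x Hx.
    rewrite Hf, Hfx0 by exact Hx. apply PSeries_decr_1, CV_radius_inside, Hin, Hx.
Qed.

Lemma sum_pow_mixed (q M : R) m :
  sum_f_R0 (fun i => q ^ S i * M ^ (m - i)) m * (M - q) = q * M ^ S m - q ^ S (S m).
Proof.
  induction m as [| m IHm]; [simpl; ring |].
  rewrite tech5, Nat.sub_diag.
  rewrite (sum_eq _ (fun i => q ^ S i * M ^ (m - i) * M)).
  - rewrite <- scal_sum, Rmult_plus_distr_r, Rmult_assoc, IHm. simpl. ring.
  - intros i Hi. replace (S m - i)%nat with (S (m - i)) by lia. simpl. ring.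
Qed.

Section Reciprocal.

Variable a : nat -> R.

(* [recip_upto n] holds the first [n + 1] coefficients of [1 / PSeries a], solved
   for successively from [PS_mult a b = 1]. *)
Fixpoint recip_upto (n : nat) : nat -> R :=
  match n with
  | O => fun _ => / a 0%nat
  | S m => fun j => if (j <=? m)%nat then recip_upto m j
           else - / a 0%nat * sum_f_R0 (fun i => a (S i) * recip_upto m (m - i)) m
  end.

Definition recip (n : nat) : R := recip_upto n n.

Lemma recip_upto_le n j : (j <= n)%nat -> recip_upto n j = recip j.
Proof.
  revert j; induction n as [| n IHn]; intros j Hj.
  - now replace j with 0%nat by lia.
  - destruct (Nat.le_gt_cases j n) as [Hl | Hl].
    + simpl. rewrite (proj2 (Nat.leb_le j n) Hl). apply IHn, Hl.
    + now replace j with (S n) by lia.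
Qed.

Lemma recip_S m :
  recip (S m) = - / a 0%nat * sum_f_R0 (fun i => a (S i) * recip (m - i)) m.
Proof.
  unfold recip at 1. cbn [recip_upto].
  replace (S m <=? m)%nat with false by (symmetry; apply Nat.leb_gt; lia).
  f_equal. apply sum_eq. intros i Hi. rewrite recip_upto_le by lia. reflexivity.
Qed.

Hypothesis a0_neq0 : a 0%nat <> 0.

Lemma PS_mult_recip_0 : PS_mult a recip 0 = 1.
Proof. unfold PS_mult, recip. simpl. field. exact a0_neq0. Qed.

Lemma PS_mult_recip_S m : PS_mult a recip (S m) = 0.
Proof.
  unfold PS_mult. rewrite decomp_sum by lia. simpl pred.
  rewrite Nat.sub_0_r, recip_S. simpl Nat.sub. field. exact a0_neq0.
Qed.

(* [M = q (1 + A / |a 0|)] is chosen so that the recursion closes: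
   [sum_(i <= n) A q^(i+1) M^(n-i) <= A q M^(n+1) / (M - q) = |a 0| M^(n+1)]. *)
Lemma recip_bound (A q : R) : 0 < A -> 0 < q -> (forall k, Rabs (a k) <= A * q ^ k) ->
  forall n, Rabs (recip n) <= / Rabs (a 0%nat) * (q + q * A / Rabs (a 0%nat)) ^ n.
Proof.
  intros HA Hq Hak.
  set (a0 := Rabs (a 0%nat)). assert (Ha0 : 0 < a0) by (apply Rabs_pos_lt, a0_neq0).
  set (M := q + q * A / a0).
  assert (HMq : M - q = q * A / a0) by (unfold M; ring).
  assert (HMq_pos : 0 < M - q) by (rewrite HMq; apply Rdiv_lt_0_compat; nra).
  assert (Hall : forall n j, (j <= n)%nat -> Rabs (recip j) <= / a0 * M ^ j).
  2:{ intros n. apply (Hall n n), le_n. }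
  induction n as [| n IHn]; intros j Hj.
  { replace j with 0%nat by lia. unfold recip. simpl.
    rewrite Rabs_inv. fold a0. lra. }
  destruct (Nat.le_gt_cases j n) as [Hl | Hl]; [apply IHn, Hl |].
  replace j with (S n) by lia. rewrite recip_S, Rabs_mult, Rabs_Ropp, Rabs_inv. fold a0.
  set (T := sum_f_R0 (fun i => q ^ S i * M ^ (n - i)) n).
  assert (HT : T <= q * M ^ S n / (M - q)).
  { apply Rmult_le_reg_r with (M - q); [exact HMq_pos |].
    unfold Rdiv. rewrite Rmult_assoc, Rinv_l, Rmult_1_r by lra. unfold T.
    rewrite sum_pow_mixed. pose proof (pow_lt q (S (S n)) Hq). lra. }
  apply Rle_trans with (/ a0 * (A / a0 * T)).
  - apply Rmult_le_compat_l; [left; apply Rinv_0_lt_compat, Ha0 |].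
    eapply Rle_trans; [apply sum_f_R0_triangle |]. unfold T. rewrite scal_sum.
    apply sum_Rle. intros i Hi. rewrite Rabs_mult.
    apply Rle_trans with (A * q ^ S i * (/ a0 * M ^ (n - i))).
    + apply Rmult_le_compat; try apply Rabs_pos; [apply Hak | apply IHn; lia].
    + right. unfold Rdiv. ring.
  - rewrite HMq in HT. apply Rle_trans with (/ a0 * (A / a0 * (q * M ^ S n / (q * A / a0)))).
    + apply Rmult_le_compat_l; [left; apply Rinv_0_lt_compat, Ha0 |].
      apply Rmult_le_compat_l; [left; apply Rdiv_lt_0_compat; lra | exact HT].
    + right. field. lra.
Qed.

End Reciprocal.

Lemma CV_radius_geometric_bound (c : nat -> R) (r : R) : 0 < r -> Rbar_le r (CV_radius c) ->
  exists A q, 0 < A /\ 0 < q /\ forall k, Rabs (c k) <= A * q ^ k.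
Proof.
  intros Hr Hc. set (rho := r / 2).
  assert (Hrho : 0 < rho) by (unfold rho; lra).
  destruct (ex_pseries_bounded_terms c rho) as [A0 HA0].
  { apply CV_radius_inside, (Rbar_lt_CV_radius _ r); [exact Hc |].
    rewrite Rabs_pos_eq; unfold rho; lra. }
  assert (HA0_pos : 0 <= A0) by exact (Rle_trans _ _ _ (Rabs_pos _) (HA0 0%nat)).
  exists (A0 + 1), (/ rho). split; [lra | split; [apply Rinv_0_lt_compat, Hrho |]].
  intros k. specialize (HA0 k).
  rewrite Rabs_mult, <- RPow_abs, (Rabs_pos_eq rho) in HA0 by lra.
  pose proof (pow_lt rho k Hrho) as Hpk.
  rewrite pow_inv. apply Rmult_le_reg_r with (rho ^ k); [exact Hpk |].
  rewrite Rmult_assoc, Rinv_l by lra. lra.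
Qed.

Lemma CV_radius_recip_pos (c : nat -> R) (r : R) :
  c 0%nat <> 0 -> 0 < r -> Rbar_le r (CV_radius c) ->
  exists rho, 0 < rho /\ Rbar_le rho (CV_radius (recip c)).
Proof.
  intros Hc0 Hr Hc.
  destruct (CV_radius_geometric_bound c r Hr Hc) as [A [q [HA [Hq Hak]]]].
  pose proof (recip_bound c Hc0 A q HA Hq Hak) as Hb.
  set (M := q + q * A / Rabs (c 0%nat)) in Hb.
  assert (Ha0 : 0 < Rabs (c 0%nat)) by (apply Rabs_pos_lt, Hc0).
  assert (HM : 0 < M).
  { assert (0 < q * A / Rabs (c 0%nat)) by (apply Rdiv_lt_0_compat; nra).
    unfold M. lra. }
  exists (/ M). split; [apply Rinv_0_lt_compat, HM |].
  apply (proj1 (CV_radius_bounded _)). exists (/ Rabs (c 0%nat)). intros n.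
  rewrite Rabs_mult, <- RPow_abs, (Rabs_pos_eq (/ M)) by (left; apply Rinv_0_lt_compat, HM).
  apply Rle_trans with (/ Rabs (c 0%nat) * M ^ n * (/ M) ^ n).
  - apply Rmult_le_compat_r; [apply pow_le; left; apply Rinv_0_lt_compat, HM | apply Hb].
  - right. rewrite pow_inv. field. pose proof (pow_lt M n HM). lra.
Qed.

Lemma analytic_at_inv (f : R -> R) (x0 : R) : analytic_at f x0 -> f x0 <> 0 ->
  exists g, analytic_at g x0 /\
    exists r, 0 < r /\ forall x, Rabs (x - x0) < r -> f x * g x = 1.
Proof.
  intros [c [r [Hr [Hc Hf]]]] Hf0.
  assert (Hx0 : Rabs (x0 - x0) < r) by (rewrite Rminus_diag, Rabs_R0; exact Hr).
  assert (Hc0 : c 0%nat <> 0).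
  { rewrite <- PSeries_0, <- (Rminus_diag x0), <- (Hf x0 Hx0). now rewrite Rminus_diag. }
  destruct (CV_radius_recip_pos c r Hc0 Hr Hc) as [rho [Hrho Hrecip]].
  set (r' := Rmin r rho).
  assert (Hr'r : r' <= r) by apply Rmin_l.
  assert (Hr'rho : r' <= rho) by apply Rmin_r.
  assert (Hr' : 0 < r') by (apply Rmin_pos; assumption).
  exists (fun x => PSeries (recip c) (x - x0)). split.
  - apply analytic_at_PSeries with r'; [exact Hr' |].
    apply Rbar_le_trans with rho; [simpl; lra | exact Hrecip].
  - exists r'. split; [exact Hr' |]. intros x Hx.
    rewrite (Hf x) by lra. rewrite <- PSeries_mult.
    + rewrite (is_pseries_unique _ _ _ (is_pseries_of_constant _ _ (PS_mult_recip_S c Hc0))).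
      apply PS_mult_recip_0, Hc0.
    + apply (Rbar_lt_CV_radius _ r); [exact Hc | lra].
    + apply (Rbar_lt_CV_radius _ rho); [exact Hrecip | lra].
Qed.

Lemma analytic_at_entire (c : nat -> R) (F : R -> R) (x0 : R) :
  (forall y, is_pseries c y (F y)) -> analytic_at (fun x => F (x - x0)) x0.
Proof.
  intros HF. exists c, 1. split; [lra |]. split.
  - apply CV_radius_ge. intros t _. exists (F t). apply HF.
  - intros x _. symmetry. apply is_pseries_unique, HF.
Qed.

Definition half_trig_coef (alpha beta : R) (n : nat) : R :=
  (if Nat.even n then alpha * cos_n (Nat.div2 n) else beta * sin_n (Nat.div2 n)) * (/ 2) ^ n.

Lemma half_trig_coef_even (alpha beta : R) n :
  half_trig_coef alpha beta (2 * n) = alpha * cos_n n * ((/ 2) ^ 2) ^ n.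
Proof.
  unfold half_trig_coef. rewrite Nat.even_mul, Nat.div2_double, pow_mult. reflexivity.
Qed.

Lemma half_trig_coef_odd (alpha beta : R) n :
  half_trig_coef alpha beta (2 * n + 1) = / 2 * (beta * sin_n n * ((/ 2) ^ 2) ^ n).
Proof.
  unfold half_trig_coef. rewrite Nat.add_comm, Nat.even_add_mul_2, pow_add, pow_mult.
  replace (1 + 2 * n)%nat with (S (2 * n)) by lia. rewrite Nat.div2_succ_double.
  simpl. ring.
Qed.

Lemma is_pseries_half_trig (alpha beta y : R) :
  is_pseries (half_trig_coef alpha beta) y (alpha * cos (y / 2) + beta * sin (y / 2)).
Proof.
  set (z := y / 2).
  assert (Hz : forall n, (Rsqr z) ^ n = ((/ 2) ^ 2) ^ n * (y ^ 2) ^ n)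
    by (intros n; rewrite <- Rpow_mult_distr; f_equal; unfold z, Rsqr; field).
  unfold cos, sin. destruct (exist_cos (Rsqr z)) as [C HC].
  destruct (exist_sin (Rsqr z)) as [S HS].
  replace (beta * (z * S)) with (y * (/ 2 * (beta * S))) by (unfold z; field).
  apply is_pseries_odd_even; apply is_pseries_Reals, is_series_Reals.
  - rewrite (Rmult_comm alpha C).
    apply is_series_ext with (fun n => cos_n n * (Rsqr z) ^ n * alpha).
    + intros n. rewrite half_trig_coef_even, Hz. simpl. ring.
    + apply is_series_scal_r, is_series_Reals, HC.
  - replace (/ 2 * (beta * S)) with (S * beta * / 2) by ring.
    apply is_series_ext with (fun n => sin_n n * (Rsqr z) ^ n * beta * / 2).
    + intros n. rewrite half_trig_coef_odd, Hz. simpl. ring.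
    + apply is_series_scal_r, is_series_scal_r, is_series_Reals, HS.
Qed.

Lemma analytic_at_div_simple_zero (f s : R -> R) (x0 ds : R) :
  analytic_at f x0 -> analytic_at s x0 -> f x0 = 0 -> s x0 = 0 ->
  is_derive s x0 ds -> ds <> 0 ->
  exists q, analytic_at q x0 /\ q x0 = Derive f x0 / ds /\
    exists r, 0 < r /\ forall x, Rabs (x - x0) < r -> x <> x0 -> s x <> 0 /\ q x = f x / s x.
Proof.
  intros Hf Hs Hf0 Hs0 Hds Hds0.
  destruct (analytic_at_slope f x0 Hf) as [F [HF [HdF [rf [Hrf Hfe]]]]].
  destruct (analytic_at_slope s x0 Hs) as [G [HG [HdG [rs [Hrs Hse]]]]].
  assert (HG0 : G x0 = ds)
    by (rewrite <- (is_derive_unique _ _ _ HdG); exact (is_derive_unique _ _ _ Hds)).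
  destruct (analytic_at_inv G x0 HG ltac:(congruence)) as [g [Hg [rg [Hrg HGg]]]].
  exists (fun x => F x * g x). split; [| split].
  - apply analytic_at_mult; assumption.
  - rewrite (is_derive_unique _ _ _ HdF).
    assert (Hx0 : Rabs (x0 - x0) < rg) by (rewrite Rminus_diag, Rabs_R0; exact Hrg).
    pose proof (HGg x0 Hx0) as H1. rewrite HG0 in H1.
    assert (Hg0 : g x0 = / ds).
    { apply (Rmult_eq_reg_l ds); [| exact Hds0]. rewrite H1, Rinv_r; [reflexivity | exact Hds0]. }
    rewrite Hg0. reflexivity.
  - exists (Rmin rf (Rmin rs rg)). split; [repeat apply Rmin_pos; assumption |].
    intros x Hx Hne.
    pose proof (Rmin_l rf (Rmin rs rg)); pose proof (Rmin_r rf (Rmin rs rg));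
    pose proof (Rmin_l rs rg); pose proof (Rmin_r rs rg).
    assert (HGx : G x * g x = 1) by (apply HGg; lra).
    assert (Hxx : x - x0 <> 0) by lra.
    assert (HGx0 : G x <> 0) by (intros HG'; rewrite HG' in HGx; lra).
    rewrite (Hfe x), (Hse x), Hf0, Hs0 by lra.
    split; [rewrite Rplus_0_l; apply Rmult_integral_contrapositive; tauto |].
    replace (g x) with (/ G x) by (field_simplify_eq; [lra | exact HGx0]).
    field. tauto.
Qed.

Lemma periodic2pi_Z (f : R -> R) (k : Z) (y : R) :
  periodic2pi f -> f (y + IZR k * (2 * PI)) = f y.
Proof.
  intros Hf.
  assert (Hnat : forall (n : nat) y, f (y + INR n * (2 * PI)) = f y).
  { induction n as [| n IHn]; intros y'; [simpl; f_equal; ring |].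
    rewrite S_INR, <- (IHn y'), <- (Hf (y' + INR n * (2 * PI))). f_equal. ring. }
  destruct (Z_le_gt_dec 0 k) as [Hk | Hk].
  - rewrite <- (Z2Nat.id k), <- INR_IZR_INZ by exact Hk. apply Hnat.
  - replace k with (- Z.of_nat (Z.to_nat (- k)))%Z by lia.
    rewrite opp_IZR, <- INR_IZR_INZ, <- (Hnat (Z.to_nat (- k))). f_equal. ring.
Qed.

Lemma Derive_periodic2pi (f : R -> R) (x : R) : periodic2pi f -> ex_derive f (x + 2 * PI) ->
  Derive f (x + 2 * PI) = Derive f x.
Proof.
  intros Hf Hd.
  rewrite <- (Derive_ext (fun y => f (y + 2 * PI)) f x Hf).
  rewrite (Derive_comp f (fun y => y + 2 * PI) x Hd) by (auto_derive; auto).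
  replace (Derive (fun y => y + 2 * PI) x) with 1 by (symmetry; apply is_derive_unique; auto_derive; auto; ring).
  ring.
Qed.

Definition half_sine (p x : R) : R := sin ((x - p) / 2).

Lemma half_sine_shift p x : half_sine p (x + 2 * PI) = - half_sine p x.
Proof. unfold half_sine. rewrite <- neg_sin. f_equal. field. Qed.

Lemma analytic_half_sine p : analytic (half_sine p).
Proof.
  intros x0. set (u := (x0 - p) / 2).
  apply analytic_at_locally with
    (fun x => sin u * cos ((x - x0) / 2) + cos u * sin ((x - x0) / 2)).
  - exact (analytic_at_entire _ (fun y => sin u * cos (y / 2) + cos u * sin (y / 2)) x0
             (is_pseries_half_trig (sin u) (cos u))).
  - exists 1. split; [lra |]. intros x _. unfold half_sine.
    rewrite <- sin_plus. f_equal. unfold u. field.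
Qed.

Lemma is_derive_half_sine p x : is_derive (half_sine p) x (cos ((x - p) / 2) / 2).
Proof. unfold half_sine. auto_derive; auto. unfold Rminus, Rdiv. ring. Qed.

Lemma half_sine_zero_cos p x : half_sine p x = 0 -> cos ((x - p) / 2) <> 0.
Proof.
  unfold half_sine. intros Hs Hc. pose proof (sin2_cos2 ((x - p) / 2)) as H.
  rewrite Hs, Hc in H. unfold Rsqr in H. lra.
Qed.

Lemma half_sine_zero_periodic (p x : R) (f : R -> R) :
  periodic2pi f -> f p = 0 -> half_sine p x = 0 -> f x = 0.
Proof.
  intros Hf Hfp Hs. apply sin_eq_0_0 in Hs. destruct Hs as [k Hk].
  replace x with (p + IZR k * (2 * PI)) by lra. rewrite periodic2pi_Z by exact Hf. exact Hfp.
Qed.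

(* At the zeros of [half_sine p] the quotient is completed by l'Hopital's value. *)
Definition half_sine_quot (p : R) (f : R -> R) (x : R) : R :=
  if Req_EM_T (half_sine p x) 0 then 2 * Derive f x / cos ((x - p) / 2)
  else f x / half_sine p x.

Section HalfSineQuotient.

Variables (p : R) (f : R -> R).
Hypotheses (f_analytic : analytic f) (f_periodic : periodic2pi f) (f_p : f p = 0).

Lemma half_sine_quot_spec x : f x = half_sine p x * half_sine_quot p f x.
Proof.
  unfold half_sine_quot. destruct (Req_EM_T (half_sine p x) 0) as [Hs | Hs].
  - rewrite Hs, (half_sine_zero_periodic p x f f_periodic f_p Hs). ring.
  - field. exact Hs.
Qed.

Lemma half_sine_quot_shift x : half_sine_quot p f (x + 2 * PI) = - half_sine_quot p f x.
Proof.
  unfold half_sine_quot. rewrite half_sine_shift, f_periodic.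
  replace ((x + 2 * PI - p) / 2) with ((x - p) / 2 + PI) by field. rewrite neg_cos.
  destruct (Req_EM_T (- half_sine p x) 0) as [H1 | H1];
    destruct (Req_EM_T (half_sine p x) 0) as [H2 | H2]; try (exfalso; lra).
  - destruct (analytic_at_slope f (x + 2 * PI) (f_analytic _)) as [F [_ [HdF _]]].
    rewrite Derive_periodic2pi by (exact f_periodic || now exists (F (x + 2 * PI))).
    field. exact (half_sine_zero_cos p x H2).
  - field. exact H2.
Qed.

Lemma analytic_half_sine_quot : analytic (half_sine_quot p f).
Proof.
  intros x0. destruct (Req_EM_T (half_sine p x0) 0) as [Hz | Hnz].
  - pose proof (half_sine_zero_cos p x0 Hz) as Hcos.
    destruct (analytic_at_div_simple_zero f (half_sine p) x0 _ (f_analytic x0)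
      (analytic_half_sine p x0) (half_sine_zero_periodic p x0 f f_periodic f_p Hz) Hz
      (is_derive_half_sine p x0) ltac:(intros H; apply Hcos; lra))
      as [q [Hq [Hq0 [r [Hr Hqe]]]]].
    apply analytic_at_locally with q; [exact Hq |]. exists r. split; [exact Hr |].
    intros x Hx. unfold half_sine_quot. destruct (Req_EM_T x x0) as [-> | Hne].
    + destruct (Req_EM_T (half_sine p x0) 0) as [_ | Hc]; [| contradiction].
      rewrite Hq0. field. exact Hcos.
    + destruct (Hqe x Hx Hne) as [Hsx ->].
      destruct (Req_EM_T (half_sine p x) 0); [contradiction | reflexivity].
  - destruct (analytic_at_inv (half_sine p) x0 (analytic_half_sine p x0) Hnz)
      as [g [Hg [r [Hr Hsg]]]].
    apply analytic_at_locally with (fun x => f x * g x);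
      [apply analytic_at_mult; [apply f_analytic | exact Hg] |].
    exists r. split; [exact Hr |]. intros x Hx. specialize (Hsg x Hx).
    unfold half_sine_quot. destruct (Req_EM_T (half_sine p x) 0) as [Hc | Hc].
    + rewrite Hc in Hsg. lra.
    + replace (g x) with (/ half_sine p x) by (field_simplify_eq; [lra | exact Hc]).
      reflexivity.
Qed.

End HalfSineQuotient.

Lemma idmul_mono (I I' K K' : (R -> R) -> Prop) :
  (forall f, I f -> I' f) -> (forall f, K f -> K' f) ->
  forall f, idmul I K f -> idmul I' K' f.
Proof.
  intros HI HK f H. induction H; [apply idmul_gen | apply idmul_add]; auto.
Qed.

Lemma idmul_iff (I I' K K' : (R -> R) -> Prop) :
  (forall f, I f <-> I' f) -> (forall f, K f <-> K' f) ->
  forall f, idmul I K f <-> idmul I' K' f.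
Proof.
  intros HI HK f. split; apply idmul_mono; intros g; first [apply HI | apply HK].
Qed.

Lemma analytic_ext (f g : R -> R) : analytic f -> (forall x, g x = f x) -> analytic g.
Proof.
  intros Hf He x0. apply analytic_at_locally with f; [apply Hf |].
  exists 1. split; [lra | intros x _; apply He].
Qed.

Lemma analytic_const (k : R) : analytic (fun _ => k).
Proof. intros x0. apply analytic_at_const. Qed.

Lemma analytic_plus (f g : R -> R) : analytic f -> analytic g -> analytic (fun x => f x + g x).
Proof. intros Hf Hg x0. apply analytic_at_plus; auto. Qed.

Lemma analytic_mult (f g : R -> R) : analytic f -> analytic g -> analytic (fun x => f x * g x).
Proof. intros Hf Hg x0. apply analytic_at_mult; auto. Qed.

Lemma analytic_pow (f : R -> R) (n : nat) : analytic f -> analytic (fun x => f x ^ n).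
Proof.
  intros Hf. induction n as [| n IHn]; [exact (analytic_const 1) |].
  exact (analytic_mult f _ Hf IHn).
Qed.

Definition twisted_periodic (N : nat) (h : R -> R) : Prop :=
  forall x, h (x + 2 * PI) = (-1) ^ N * h x.

Definition twisted_multiples (N : nat) (G f : R -> R) : Prop :=
  exists h, analytic h /\ twisted_periodic N h /\ forall x, f x = G x * h x.

Lemma twisted_periodic_const0 (k : R) : twisted_periodic 0 (fun _ => k).
Proof. intros x. simpl. ring. Qed.

Lemma twisted_periodic_mult N1 N2 h1 h2 : twisted_periodic N1 h1 -> twisted_periodic N2 h2 ->
  twisted_periodic (N1 + N2) (fun x => h1 x * h2 x).
Proof. intros H1 H2 x. rewrite H1, H2, pow_add. ring. Qed.

Lemma twisted_periodic_add_even N k h :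
  twisted_periodic (N + 2 * k) h <-> twisted_periodic N h.
Proof. split; intros H x; rewrite H, pow_add, pow_1_even; ring. Qed.

Lemma twisted_periodic_half_sine p : twisted_periodic 1 (half_sine p).
Proof. intros x. rewrite half_sine_shift. ring. Qed.

Lemma twisted_multiples_ext N G G' f :
  (forall x, G x = G' x) -> twisted_multiples N G f <-> twisted_multiples N G' f.
Proof.
  intros HG. split; intros [h [Hh [Hp Hf]]]; exists h; repeat split; auto;
    intros x; rewrite Hf, HG; reflexivity.
Qed.

Lemma Can_twisted_multiples f : Can f <-> twisted_multiples 0 (fun _ => 1) f.
Proof.
  split.
  - intros [Ha Hp]. exists f. split; [now apply real_analytic_analytic |].
    split; [intros x; rewrite Hp; simpl; ring | intros x; ring].
  - intros [h [Ha [Hp Hf]]]. split.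
    + apply real_analytic_analytic, (analytic_ext h); [exact Ha |].
      intros x. rewrite Hf. ring.
    + intros x. rewrite !Hf, Hp. simpl. ring.
Qed.

Lemma mideal_twisted_multiples p f : mideal p f <-> twisted_multiples 1 (half_sine p) f.
Proof.
  split.
  - intros [[Ha Hp] Hfp]. apply real_analytic_analytic in Ha.
    exists (half_sine_quot p f). split; [| split].
    + exact (analytic_half_sine_quot p f Ha Hp Hfp).
    + intros x. rewrite (half_sine_quot_shift p f Ha Hp). ring.
    + exact (half_sine_quot_spec p f Hp Hfp).
  - intros [h [Ha [Hp Hf]]]. split; [split |].
    + apply real_analytic_analytic, (analytic_ext (fun x => half_sine p x * h x));
        [apply analytic_mult; [apply analytic_half_sine | exact Ha] | exact Hf].
    + intros x. rewrite !Hf, Hp, half_sine_shift. ring.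
    + rewrite Hf. unfold half_sine. rewrite Rminus_diag, Rdiv_0_l, sin_0. ring.
Qed.

Lemma idmul_twisted_multiples N1 N2 G1 G2 f :
  idmul (twisted_multiples N1 G1) (twisted_multiples N2 G2) f ->
  twisted_multiples (N1 + N2) (fun x => G1 x * G2 x) f.
Proof.
  induction 1 as [g h [h1 [Ha1 [Hp1 Hf1]]] [h2 [Ha2 [Hp2 Hf2]]]
                 | f1 f2 _ [h1 [Ha1 [Hp1 Hf1]]] _ [h2 [Ha2 [Hp2 Hf2]]]].
  - exists (fun x => h1 x * h2 x). split; [| split].
    + apply analytic_mult; assumption.
    + apply twisted_periodic_mult; assumption.
    + intros x. rewrite Hf1, Hf2. ring.
  - exists (fun x => h1 x + h2 x). split; [| split].
    + apply analytic_plus; assumption.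
    + intros x. rewrite Hp1, Hp2. ring.
    + intros x. rewrite Hf1, Hf2. ring.
Qed.

Lemma idmul_twisted_multiples_gen N1 N2 G1 G2 h1 h2 f :
  analytic h1 -> twisted_periodic N1 h1 -> analytic h2 -> twisted_periodic N2 h2 ->
  (forall x, f x = (G1 x * h1 x) * (G2 x * h2 x)) ->
  idmul (twisted_multiples N1 G1) (twisted_multiples N2 G2) f.
Proof.
  intros Ha1 Hp1 Ha2 Hp2 Hf.
  replace f with (fun x => (G1 x * h1 x) * (G2 x * h2 x)) by (symmetry; exact (functional_extensionality _ _ Hf)).
  apply idmul_gen; [exists h1 | exists h2]; repeat split; auto; intros x; reflexivity.
Qed.

(* When [N1] and [N2] are both odd, [h] is split along [cos^2 + sin^2 = 1] with the
   antiperiodic [cos (x/2) = s_(-pi)(x)] and [sin (x/2) = s_0(x)]. *)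
Lemma twisted_multiples_idmul N1 N2 G1 G2 f :
  twisted_multiples (N1 + N2) (fun x => G1 x * G2 x) f ->
  idmul (twisted_multiples N1 G1) (twisted_multiples N2 G2) f.
Proof.
  intros [h [Ha [Hp Hf]]].
  assert (Hone : forall m, twisted_periodic (2 * m) (fun _ => 1))
    by (intros m; exact (proj2 (twisted_periodic_add_even 0 m _) (twisted_periodic_const0 1))).
  destruct (Nat.Even_or_Odd N2) as [[m2 E2] | [m2 E2]].
  { rewrite E2 in Hp |- *. apply twisted_periodic_add_even in Hp.
    apply (idmul_twisted_multiples_gen _ _ G1 G2 h (fun _ => 1));
      auto using analytic_const. intros x. rewrite Hf. ring. }
  destruct (Nat.Even_or_Odd N1) as [[m1 E1] | [m1 E1]].
  { rewrite E1, Nat.add_comm in Hp. rewrite E1. apply twisted_periodic_add_even in Hp.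
    apply (idmul_twisted_multiples_gen _ _ G1 G2 (fun _ => 1) h);
      auto using analytic_const. intros x. rewrite Hf. ring. }
  assert (Hs : forall q, twisted_periodic N2 (half_sine q)).
  { intros q. rewrite E2, Nat.add_comm. apply twisted_periodic_add_even, twisted_periodic_half_sine. }
  assert (Hhs : forall q, twisted_periodic N1 (fun x => h x * half_sine q x)).
  { intros q. apply (twisted_periodic_add_even _ (S m2)).
    replace (N1 + 2 * S m2)%nat with (N1 + N2 + 1)%nat by lia.
    apply twisted_periodic_mult; [exact Hp | apply twisted_periodic_half_sine]. }
  set (c := half_sine (- PI)). set (s := half_sine 0).
  assert (Hcs : forall x, c x * c x + s x * s x = 1).
  { intros x. unfold c, s, half_sine.
    replace ((x - - PI) / 2) with ((x - 0) / 2 + PI / 2) by field.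
    rewrite sin_plus, sin_PI2, cos_PI2. pose proof (sin2_cos2 ((x - 0) / 2)) as H.
    unfold Rsqr in H. lra. }
  replace f with (fun x => (G1 x * (h x * c x)) * (G2 x * c x)
                         + (G1 x * (h x * s x)) * (G2 x * s x)).
  2:{ apply functional_extensionality. intros x. rewrite Hf.
      transitivity (G1 x * G2 x * h x * (c x * c x + s x * s x)); [ring | rewrite Hcs; ring]. }
  apply idmul_add;
    [apply (idmul_twisted_multiples_gen _ _ _ _ (fun x => h x * c x) c) |
     apply (idmul_twisted_multiples_gen _ _ _ _ (fun x => h x * s x) s)];
    try reflexivity; unfold c, s; auto using analytic_mult, analytic_half_sine.
Qed.

Lemma idmul_twisted_multiples_iff N1 N2 G1 G2 f :
  idmul (twisted_multiples N1 G1) (twisted_multiples N2 G2) f <->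
  twisted_multiples (N1 + N2) (fun x => G1 x * G2 x) f.
Proof. split; [apply idmul_twisted_multiples | apply twisted_multiples_idmul]. Qed.

Lemma idpow_mideal p a f :
  idpow (mideal p) a f <-> twisted_multiples a (fun x => half_sine p x ^ a) f.
Proof.
  revert f; induction a as [| a IHa]; intros f; [apply Can_twisted_multiples |].
  simpl idpow. rewrite (idmul_iff _ _ _ _ IHa (mideal_twisted_multiples p)).
  rewrite idmul_twisted_multiples_iff, Nat.add_1_r.
  apply twisted_multiples_ext. intros x. simpl. ring.
Qed.

Fixpoint half_sine_prod (n : nat) (p : nat -> R) (a : nat -> nat) (x : R) : R :=
  match n with
  | O => 1
  | S m => half_sine_prod m p a x * half_sine (p m) x ^ a m
  end.

Lemma prod_mpow_twisted_multiples n p a f :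
  prod_mpow n p a f <-> twisted_multiples (nsum n a) (half_sine_prod n p a) f.
Proof.
  revert f; induction n as [| n IHn]; intros f; [apply Can_twisted_multiples |].
  simpl prod_mpow. rewrite (idmul_iff _ _ _ _ IHn (idpow_mideal (p n) (a n))).
  apply idmul_twisted_multiples_iff.
Qed.

Lemma analytic_half_sine_prod n p a : analytic (half_sine_prod n p a).
Proof.
  induction n as [| n IHn]; [apply analytic_const |].
  apply analytic_mult; [exact IHn | apply analytic_pow, analytic_half_sine].
Qed.

Lemma twisted_periodic_half_sine_prod n p a :
  twisted_periodic (nsum n a) (half_sine_prod n p a).
Proof.
  induction n as [| n IHn]; [apply twisted_periodic_const0 |].
  apply twisted_periodic_mult; [exact IHn |].
  intros x. rewrite half_sine_shift, <- Rpow_mult_distr. f_equal. ring.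
Qed.

Lemma Can_analytic_twisted_periodic m h :
  Can h <-> analytic h /\ twisted_periodic (2 * m) h.
Proof.
  unfold Can. rewrite real_analytic_analytic, (twisted_periodic_add_even 0 m h).
  unfold twisted_periodic, periodic2pi. simpl.
  split; intros [Ha Hp]; split; auto; intros x; rewrite Hp; ring.
Qed.

Lemma twisted_multiples_even N G f : Nat.Even N ->
  twisted_multiples N G f <-> exists h, Can h /\ forall x, f x = G x * h x.
Proof.
  intros [m ->]. unfold twisted_multiples.
  split; intros [h Hh]; exists h; rewrite (Can_analytic_twisted_periodic m h) in *; tauto.
Qed.

Theorem corollary1 (n : nat) (p : nat -> R) (a : nat -> nat) :
  Nat.Even (nsum n a) -> principal_ideal (prod_mpow n p a).
Proof.
  intros [m Hm]. exists (half_sine_prod n p a). split.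
  - apply (Can_analytic_twisted_periodic m). rewrite <- Hm.
    split; [apply analytic_half_sine_prod | apply twisted_periodic_half_sine_prod].
  - intros f. rewrite prod_mpow_twisted_multiples.
    apply twisted_multiples_even. exists m. exact Hm.
Qed.
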